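(* Let $X$ be a smooth projective complex variety with $\operatorname{Pic}(X)$ finitely generated, and let $G$ be a finite group acting on $\operatorname{Pic}(X)$ by group automorphisms such that $\chi(gD)=\chi(D)$ for all $g\in G$ and $[D]\in\operatorname{Pic}(X)$. Then there exists a finite set $S\subset\operatorname{Pic}(X)$ such that \[ \operatorname{Pic}^\chi(X,G)=\left\langle \chi(D)\langle D\rangle_G \;\middle|\; [D]\in S\right\rangle . \]
   Context: $\chi(D)$ denotes the Euler–Poincaré characteristic of the line bundle $\mathcal{O}_X(D)$. For $[D]\in\operatorname{Pic}(X)$, $\langle D\rangle_G:=\sum_{[E]\in G\cdot[D]}[E]$ is the sum over the $G$-orbit of $[D]$. $\operatorname{Pic}^\chi(X,G)$ is the subgroup of $\operatorname{Pic}(X)$ generated by $\chi(D)\langle D\rangle_G$ for all $[D]\in\operatorname{Pic}(X)$. *)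

From HB Require Import structures.
From mathcomp Require Import all_boot all_order all_algebra all_fingroup.
Set Implicit Arguments. Unset Strict Implicit. Unset Printing Implicit Defensive.
Import GRing.Theory.
Local Open Scope ring_scope.

(* Abstract model of Pic(X): an additive abelian group A (zmodType). *)

Definition in_span (A : zmodType) (P : A -> Prop) (x : A) : Prop :=
  exists (n : nat) (v : 'I_n -> A) (c : 'I_n -> int),
    (forall i, P (v i)) /\ x = \sum_(i < n) v i *~ c i.

Definition fin_gen (A : zmodType) : Prop :=
  exists (n : nat) (v : 'I_n -> A), forall a : A,
    exists c : 'I_n -> int, a = \sum_(i < n) v i *~ c i.

Definition is_group_action (gT : finGroupType) (A : zmodType)
    (act : gT -> A -> A) : Prop :=
  [/\ forall g x y, act g (x + y) = act g x + act g y,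
      forall x, act 1%g x = x
    & forall g h x, act (g * h)%g x = act g (act h x)].

Definition orbit_sum (gT : finGroupType) (A : zmodType)
    (act : gT -> A -> A) (D : A) : A :=
  \sum_(E <- undup [seq act g D | g <- enum [set: gT]]) E.

Definition Picchi (gT : finGroupType) (A : zmodType)
    (act : gT -> A -> A) (chi : A -> int) (x : A) : Prop :=
  in_span (fun y => exists D : A, y = orbit_sum act D *~ chi D) x.

From mathcomp Require Import all_boot all_algebra all_fingroup boolp.
Import GRing.Theory.
Local Open Scope ring_scope.
Set Implicit Arguments. Unset Strict Implicit.

(* Neither the action nor the invariance of chi plays a role: Pic^chi(X,G) is a
   subgroup of the finitely generated abelian group Pic(X), hence is finitely
   generated (subgroups of Z are cyclic, and one induces on the number of
   generators of Pic(X)).  Each of its finitely many generators is an integer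
   combination of finitely many chi(D)<D>_G, and S collects the D involved. *)

Section Zspan.
Variable A : zmodType.

Inductive zspan (P : A -> Prop) : A -> Prop :=
| zspan0 : zspan P 0
| zspan_mem y : P y -> zspan P y
| zspanB x y : zspan P x -> zspan P y -> zspan P (x - y).

Definition is_subgroup (H : A -> Prop) :=
  H 0 /\ forall x y, H x -> H y -> H (x - y).

Lemma zspan_subgroup P : is_subgroup (zspan P).
Proof. by split; [exact: zspan0 | exact: zspanB]. Qed.

Lemma subgroup_zspan H x : is_subgroup H -> zspan H x -> H x.
Proof. by move=> [H0 HB]; elim=> // u v _ Hu _ Hv; exact: HB. Qed.

Lemma zspanN P x : zspan P x -> zspan P (- x).
Proof. by move=> Px; rewrite -sub0r; apply: zspanB => //; exact: zspan0. Qed.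

Lemma zspanD P x y : zspan P x -> zspan P y -> zspan P (x + y).
Proof. by move=> Px Py; rewrite -[y]opprK; apply: zspanB => //; exact: zspanN. Qed.

Lemma zspanMz P x k : zspan P x -> zspan P (x *~ k).
Proof.
move=> Px; have Pxn n : zspan P (x *+ n).
  by elim: n => [|n IHn]; [rewrite mulr0n; exact: zspan0 | rewrite mulrS; exact: zspanD].
by case: k => n; rewrite ?NegzE ?mulrNz -pmulrn //; exact: zspanN.
Qed.

Lemma zspan_sum P n (v : 'I_n -> A) (c : 'I_n -> int) :
  (forall i, P (v i)) -> zspan P (\sum_(i < n) v i *~ c i).
Proof.
move=> Pv; apply: (big_ind (zspan P)); [exact: zspan0 | exact: zspanD |].
by move=> i _; apply/zspanMz/zspan_mem.
Qed.

Lemma zspan_trans P Q x : (forall y, P y -> zspan Q y) -> zspan P x -> zspan Q x.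
Proof. by move=> PQ; elim=> [|y /PQ|u v _ Qu _ Qv] //; [exact: zspan0 | exact: zspanB]. Qed.

Lemma zspanS P Q x : (forall y, P y -> Q y) -> zspan P x -> zspan Q x.
Proof. by move=> PQ; apply: zspan_trans => y /PQ; exact: zspan_mem. Qed.

Lemma in_spanE P x : in_span P x <-> zspan P x.
Proof.
split; first by case=> n [v [c [Pv ->]]]; exact: zspan_sum.
elim=> [|y Py|u w _ [n1 [v1 [c1 [Pv1 ->]]]] _ [n2 [v2 [c2 [Pv2 ->]]]]].
- by exists 0%N, (fun=> 0), (fun=> 0); rewrite big_ord0; split => // -[].
- by exists 1%N, (fun=> y), (fun=> 1); rewrite big_ord1.
- exists (n1 + n2)%N, (fun i => match split i with inl j => v1 j | inr j => v2 j end),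
    (fun i => match split i with inl j => c1 j | inr j => - c2 j end).
  split=> [i|]; first by case: (split i).
  rewrite big_split_ord -sumrN; congr (_ + _); apply: eq_bigr => j _.
    by rewrite (unsplitK (inl j)).
  by rewrite (unsplitK (inr j)) mulrNz.
Qed.

Lemma subrACA (x y u v : A) : (x - y) - (u - v) = (x - u) - (y - v).
Proof. by rewrite !opprB addrACA [RHS]addrACA (addrC (- y)). Qed.

Lemma fin_genP : fin_gen A -> exists s : seq A, forall x, zspan (fun y => y \in s) x.
Proof.
move=> [n [v gen_v]]; exists (codom v) => x; have [c ->] := gen_v x.
by apply: zspan_sum => i; exact: codom_f.
Qed.

Lemma zspan_cons a s x : zspan (fun y => y \in a :: s) x ->
  exists k, zspan (fun y => y \in s) (x - a *~ k).
Proof.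
elim=> [|y|y z _ [ky sy] _ [kz sz]].
- by exists 0; rewrite subr0; exact: zspan0.
- rewrite /= in_cons => /orP[/eqP->|sy].
    by exists 1; rewrite subrr; exact: zspan0.
  by exists 0; rewrite subr0; exact: zspan_mem.
- by exists (ky - kz); rewrite mulrzBr subrACA; exact: zspanB.
Qed.

End Zspan.

Lemma int_subgroup_cyclic (I : int -> Prop) :
  is_subgroup I -> exists2 d, I d & forall k, I k -> (d %| k)%Z.
Proof.
move=> sI; have [I0 IB] := sI.
have IM d q : I d -> I (q * d).
  by rewrite mulrC -mulrzz => Id; apply: (subgroup_zspan sI); apply/zspanMz/zspan_mem.
have [[m Im]|no_pos] := pselect (exists m : nat, I m.+1%:Z); last first.
  exists 0 => // k; case: k => [[|m]|m] Ik //; case: no_pos; exists m => //.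
  by have := IB _ _ I0 Ik; rewrite sub0r NegzE opprK.
have /ex_minnP[m' /asboolP Im' m'_min] : exists m, `[< I m.+1%:Z >].
  by exists m; exact/asboolP.
exists m'.+1%:Z => // k Ik; apply/dvdz_mod0P.
have : I (k %% m'.+1)%Z.
  have -> : (k %% m'.+1)%Z = k - (k %/ m'.+1)%Z * m'.+1.
    by rewrite {2}(divz_eq k m'.+1) addrC addKr.
  by apply: IB => //; exact: IM.
have : (0 <= k %% m'.+1 < m'.+1)%Z by rewrite modz_ge0 ?ltz_pmod.
case: (k %% m'.+1)%Z => [[|r]|r] //=; rewrite ltz_nat => r_lt Ir.
by have := m'_min r (asboolT Ir); rewrite leqNgt -ltnS r_lt.
Qed.

Lemma subgroup_fin_gen (A : zmodType) (s : seq A) (H : A -> Prop) :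
  is_subgroup H -> (forall h, H h -> zspan (fun y => y \in s) h) ->
  exists L : seq A, (forall y, y \in L -> H y) /\
                    (forall h, H h -> zspan (fun y => y \in L) h).
Proof.
elim: s H => [|a s IHs] H sH Hs; first by exists [::].
have [H0 HB] := sH.
pose Hs' h := H h /\ zspan (fun y => y \in s) h.
have sHs' : is_subgroup Hs'.
  by split=> [|x y [Hx sx] [Hy sy]]; split; [|exact: zspan0|exact: HB|exact: zspanB].
have [L [LH gen_L]] := IHs Hs' sHs' (fun h Hh => Hh.2).
(* the a-coordinates of the elements of H, modulo the span of s *)
pose I k := exists2 h, H h & zspan (fun y => y \in s) (h - a *~ k).
have sI : is_subgroup I.
  split; first by exists 0; rewrite // subr0; exact: zspan0.
  move=> k l [h Hh sh] [h' Hh' sh']; exists (h - h'); first exact: HB.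
  by rewrite mulrzBr subrACA; exact: zspanB.
have [d [w Hw sw] d_dvd] := int_subgroup_cyclic sI.
exists (w :: L); split=> [y|h Hh].
  by rewrite in_cons => /orP[/eqP->|/LH[]].
have [k sk] := zspan_cons (Hs h Hh).
have [q def_k] : exists q, k = q * d by apply/dvdzP/d_dvd; exists h.
(* h - w q is still in H and, since k = q d, its a-coordinate vanishes *)
have Hs'hw : Hs' (h - w *~ q).
  split; first by apply: HB => //; apply: (subgroup_zspan sH); apply/zspanMz/zspan_mem.
  have -> : h - w *~ q = (h - a *~ k) - (w - a *~ d) *~ q.
    by rewrite def_k mulrzBl mulrC mulrzA subrACA subrr subr0.
  by apply: zspanB => //; exact: zspanMz.
rewrite -(subrK (w *~ q) h); apply: zspanD.
  by apply: zspanS (gen_L _ Hs'hw) => y /= yL; rewrite in_cons yL orbT.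
by apply/zspanMz/zspan_mem; exact: mem_head.
Qed.

Section FiniteFamily.
Variables (T : eqType) (A : zmodType) (f : T -> A).

Definition in_family_of (S : seq T) (y : A) := exists2 D, D \in S & y = f D.

Lemma in_family_ofS S1 S2 x : {subset S1 <= S2} ->
  zspan (in_family_of S1) x -> zspan (in_family_of S2) x.
Proof. by move=> S12; apply: zspanS => y [D /S12 S2D ->]; exists D. Qed.

Lemma zspan_finite_family x : zspan (fun y => exists D, y = f D) x ->
  exists S, zspan (in_family_of S) x.
Proof.
elim=> [|y [D ->]|y z _ [S1 sy] _ [S2 sz]].
- by exists [::]; exact: zspan0.
- by exists [:: D]; apply: zspan_mem; exists D; rewrite ?mem_seq1.
- exists (S1 ++ S2); apply: zspanB.
    by apply: in_family_ofS sy => D D1; rewrite mem_cat D1.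
  by apply: in_family_ofS sz => D D2; rewrite mem_cat D2 orbT.
Qed.

Lemma zspan_finite_family_seq (L : seq A) :
  (forall y, y \in L -> zspan (fun y => exists D, y = f D) y) ->
  exists S, forall y, y \in L -> zspan (in_family_of S) y.
Proof.
elim: L => [|a L IHL] L_span; first by exists [::].
have [S1 s1] := zspan_finite_family (L_span a (mem_head _ _)).
have [S2 s2] := IHL (fun y yL => L_span y (mem_behead (s := a :: L) yL)).
exists (S1 ++ S2) => y; rewrite in_cons => /orP[/eqP->|yL].
  by apply: in_family_ofS s1 => D D1; rewrite mem_cat D1.
by apply: in_family_ofS (s2 y yL) => D D2; rewrite mem_cat D2 orbT.
Qed.

End FiniteFamily.

Theorem theorem5p4 (A : zmodType) (gT : finGroupType)
    (act : gT -> A -> A) (chi : A -> int)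
    (hfg : fin_gen A)
    (hact : is_group_action act)
    (hchi : forall (g : gT) (D : A), chi (act g D) = chi D) :
  exists S : seq A, forall x : A,
    Picchi act chi x <->
    in_span (fun y => exists2 D : A, D \in S & y = orbit_sum act D *~ chi D) x.
Proof.
pose f D := orbit_sum act D *~ chi D.
have [s gen_s] := fin_genP hfg.
have [L [L_span gen_L]] :=
  subgroup_fin_gen (zspan_subgroup (fun y => exists D, y = f D)) (fun h _ => gen_s h).
have [S gen_S] := zspan_finite_family_seq L_span.
exists S => x; rewrite /Picchi !in_spanE; split=> [Px|].
  exact: zspan_trans gen_S (gen_L x Px).
by apply: zspanS => y [D _ ->]; exists D.
Qed.
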